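(* Let $f$ be meromorphic on $\mathbb{C}$, not identically zero, and suppose there is $\omega\in\mathbb{C}\setminus\{0\}$ such that for every $t\in\mathbb{R}$ the phase of $f$ is invariant under translation by $t\omega$, i.e. $f(z+t\omega)/|f(z+t\omega)|=f(z)/|f(z)|$ whenever both sides are defined. Then there exist $a,b\in\mathbb{C}$ with $f(z)=\mathrm{e}^{az+b}$ for all $z\in\mathbb{C}$.
   Context: The phase $f(z)/|f(z)|$ is defined at points where $f(z)\in\mathbb{C}\setminus\{0\}$. *)

From Stdlib Require Import Reals.
Open Scope R_scope.

Definition CC : Type := (R * R)%type.

Definition Cadd (z w : CC) : CC := (fst z + fst w, snd z + snd w).
Definition Csub (z w : CC) : CC := (fst z - fst w, snd z - snd w).
Definition Cmul (z w : CC) : CC :=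
  (fst z * fst w - snd z * snd w, fst z * snd w + snd z * fst w).
Definition Cscal (t : R) (z : CC) : CC := (t * fst z, t * snd z).
Definition Cnorm (z : CC) : R := sqrt (fst z * fst z + snd z * snd z).
Definition C0 : CC := (0, 0).
Definition Cexp (z : CC) : CC := (exp (fst z) * cos (snd z), exp (fst z) * sin (snd z)).
(* phase z / |z| (meaningful for z <> 0) *)
Definition Cphase (z : CC) : CC := Cscal (/ Cnorm z) z.

Definition C_differentiable_at (f : CC -> CC) (z : CC) : Prop :=
  exists l : CC, forall eps, 0 < eps -> exists d, 0 < d /\
    forall h : CC, 0 < Cnorm h < d ->
      Cnorm (Csub (Csub (f (Cadd z h)) (f z)) (Cmul l h)) <= eps * Cnorm h.

(* The values f p for p in P are irrelevant. *)
Definition meromorphic_on_C (f : CC -> CC) (P : CC -> Prop) : Prop :=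
  (forall z, exists r, 0 < r /\ forall w, P w -> w <> z -> r <= Cnorm (Csub w z)) /\
  (forall z, ~ P z -> C_differentiable_at f z) /\
  (forall p, P p -> forall M, exists d, 0 < d /\
     forall w, 0 < Cnorm (Csub w p) < d -> M < Cnorm (f w)).

From Stdlib Require Import Reals Lra Psatz Classical FunctionalExtensionality.
Open Scope R_scope.

(* Write [u = z + (t + i s) omega] near a point [z] where [f] is holomorphic and nonzero.
   Phase invariance says that [F t s := f u] keeps its phase as [t] varies, so [dF/dt] is parallel
   to [F]; by Cauchy-Riemann [dF/ds = i dF/dt], hence [|F|] does not depend on [s].  Thus [F t s]
   has the modulus of [F t 0] and the phase of [F 0 s], i.e. [F t s F 0 0 = F t 0 F 0 s], and the
   restrictions of [F] to the two axes solve linear ODEs: [f] is [exp (a u + b)] near [z].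
   The set of points near which [f] agrees with this exponential is open, and it contains its
   limit points: the exponential is bounded above and below there, which excludes a pole and a
   zero, and two exponentials of affine functions agreeing near a point agree everywhere.
   A supremum argument along the segment from [z] to any [w] concludes. *)

Lemma CC_eq (a b : CC) : fst a = fst b -> snd a = snd b -> a = b.
Proof. destruct a, b; simpl; intros -> ->; reflexivity. Qed.

Ltac cunfold := unfold Cadd, Csub, Cmul, Cscal, C0, Cexp in *; simpl in *.
Ltac ceq := apply CC_eq; cunfold; simpl; try ring.

Definition Cone : CC := (1, 0).
Definition Ci : CC := (0, 1).

Definition Cinv (z : CC) : CC :=
  (fst z / (fst z * fst z + snd z * snd z), - snd z / (fst z * fst z + snd z * snd z)).

Lemma Csqnorm_pos (z : CC) : z <> C0 -> 0 < fst z * fst z + snd z * snd z.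
Proof.
  destruct z as [x y]; simpl; intros Hz.
  destruct (Req_dec x 0) as [->|Hx]; [destruct (Req_dec y 0) as [->|Hy]|].
  - exfalso; apply Hz; reflexivity.
  - nra.
  - nra.
Qed.

Lemma Cmul_inv (z : CC) : z <> C0 -> Cmul z (Cinv z) = Cone.
Proof.
  intros Hz; pose proof (Csqnorm_pos z Hz).
  destruct z as [x y]; unfold Cinv, Cone; ceq; field; lra.
Qed.

Lemma Cmul_cancel (c x y : CC) : c <> C0 -> Cmul c x = Cmul c y -> x = y.
Proof.
  intros Hc Hxy.
  assert (Hl : forall u, u = Cmul (Cinv c) (Cmul c u)).
  { intros u; transitivity (Cmul (Cmul c (Cinv c)) u); [rewrite Cmul_inv by exact Hc|]; ceq. }
  rewrite (Hl x), (Hl y), Hxy; reflexivity.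
Qed.

Lemma Cnorm_nonneg (z : CC) : 0 <= Cnorm z.
Proof. apply sqrt_pos. Qed.

Lemma Cnorm_sq (z : CC) : Cnorm z * Cnorm z = fst z * fst z + snd z * snd z.
Proof. apply sqrt_sqrt; nra. Qed.

Lemma Cnorm_pos (z : CC) : z <> C0 -> 0 < Cnorm z.
Proof. intros Hz; apply sqrt_lt_R0, Csqnorm_pos, Hz. Qed.

Lemma Cnorm_C0 : Cnorm C0 = 0.
Proof. unfold Cnorm, C0; simpl; rewrite Rmult_0_l, Rplus_0_l; apply sqrt_0. Qed.

Lemma Cnorm_eq0 (z : CC) : Cnorm z = 0 -> z = C0.
Proof.
  intros H; apply NNPP; intros Hz; pose proof (Cnorm_pos z Hz); lra.
Qed.

Lemma Cnorm_mul (a b : CC) : Cnorm (Cmul a b) = Cnorm a * Cnorm b.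
Proof.
  apply sqrt_lem_1; [unfold Cmul; simpl; nra | apply Rmult_le_pos; apply Cnorm_nonneg |].
  transitivity ((Cnorm a * Cnorm a) * (Cnorm b * Cnorm b)); [ring|].
  rewrite !Cnorm_sq; unfold Cmul; simpl; ring.
Qed.

Lemma Cnorm_scal (t : R) (z : CC) : Cnorm (Cscal t z) = Rabs t * Cnorm z.
Proof.
  apply sqrt_lem_1; [unfold Cscal; simpl; nra | apply Rmult_le_pos; [apply Rabs_pos | apply Cnorm_nonneg] |].
  transitivity ((Rabs t * Rabs t) * (Cnorm z * Cnorm z)); [ring|].
  rewrite Cnorm_sq, <- Rabs_mult, Rabs_pos_eq by nra; unfold Cscal; simpl; ring.
Qed.

Lemma Cnorm_real (x : R) : Cnorm (x, 0) = Rabs x.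
Proof.
  apply sqrt_lem_1; [simpl; nra | apply Rabs_pos |].
  rewrite <- Rabs_mult, Rabs_pos_eq; simpl; nra.
Qed.

Lemma Cnorm_Cinv (z : CC) : z <> C0 -> Cnorm (Cinv z) = / Cnorm z.
Proof.
  intros Hz; pose proof (Cnorm_pos z Hz).
  assert (H1 : Cnorm z * Cnorm (Cinv z) = 1).
  { rewrite <- Cnorm_mul, Cmul_inv by exact Hz; unfold Cone; rewrite Cnorm_real; apply Rabs_R1. }
  apply (Rmult_eq_reg_l (Cnorm z)); [rewrite H1; field|]; lra.
Qed.

Lemma Rabs_fst_le (z : CC) : Rabs (fst z) <= Cnorm z.
Proof.
  apply Rsqr_incr_0_var; [| apply Cnorm_nonneg].
  rewrite <- Rsqr_abs; unfold Rsqr; rewrite Cnorm_sq; nra.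
Qed.

Lemma Rabs_snd_le (z : CC) : Rabs (snd z) <= Cnorm z.
Proof.
  apply Rsqr_incr_0_var; [| apply Cnorm_nonneg].
  rewrite <- Rsqr_abs; unfold Rsqr; rewrite Cnorm_sq; nra.
Qed.

Lemma Cnorm_le_Rabs_sum (z : CC) : Cnorm z <= Rabs (fst z) + Rabs (snd z).
Proof.
  pose proof (Rabs_pos (fst z)); pose proof (Rabs_pos (snd z)).
  apply Rsqr_incr_0_var; [| lra]; unfold Rsqr; rewrite Cnorm_sq.
  rewrite <- (Rabs_pos_eq (fst z * fst z)), <- (Rabs_pos_eq (snd z * snd z)), !Rabs_mult by nra.
  nra.
Qed.

Lemma Cnorm_triangle (a b : CC) : Cnorm (Cadd a b) <= Cnorm a + Cnorm b.
Proof.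
  pose proof (Cnorm_nonneg a); pose proof (Cnorm_nonneg b).
  assert (Hcs : fst a * fst b + snd a * snd b <= Cnorm a * Cnorm b).
  { apply Rsqr_incr_0_var; [| nra]; unfold Rsqr.
    transitivity ((Cnorm a * Cnorm a) * (Cnorm b * Cnorm b)); [| right; ring].
    rewrite !Cnorm_sq; pose proof (Rle_0_sqr (fst a * snd b - snd a * fst b)); unfold Rsqr in *; nra. }
  apply Rsqr_incr_0_var; [| nra]; unfold Rsqr.
  rewrite Cnorm_sq; unfold Cadd; simpl.
  pose proof (Cnorm_sq a); pose proof (Cnorm_sq b); nra.
Qed.

Lemma Cnorm_sub_sym (a b : CC) : Cnorm (Csub a b) = Cnorm (Csub b a).
Proof. unfold Cnorm, Csub; simpl; f_equal; ring. Qed.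

Lemma Cnorm_sub_triangle (a b c : CC) :
  Cnorm (Csub a c) <= Cnorm (Csub a b) + Cnorm (Csub b c).
Proof.
  replace (Csub a c) with (Cadd (Csub a b) (Csub b c)) by ceq.
  apply Cnorm_triangle.
Qed.

Lemma Cnorm_Cexp (z : CC) : Cnorm (Cexp z) = exp (fst z).
Proof.
  apply sqrt_lem_1; [unfold Cexp; simpl; nra | left; apply exp_pos |].
  pose proof (sin2_cos2 (snd z)) as Hsc; unfold Rsqr in Hsc; unfold Cexp; simpl.
  transitivity (exp (fst z) * exp (fst z) * (sin (snd z) * sin (snd z) + cos (snd z) * cos (snd z)));
    [rewrite Hsc | ]; ring.
Qed.

Lemma Cexp_neq0 (z : CC) : Cexp z <> C0.
Proof.
  intros H; pose proof (Cnorm_Cexp z) as Hn; rewrite H, Cnorm_C0 in Hn.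
  pose proof (exp_pos (fst z)); lra.
Qed.

Lemma Cexp_add (x y : CC) : Cexp (Cadd x y) = Cmul (Cexp x) (Cexp y).
Proof. unfold Cexp, Cadd, Cmul; simpl; rewrite exp_plus, cos_plus, sin_plus; ceq. Qed.

Lemma Cexp_C0 : Cexp C0 = Cone.
Proof. unfold Cexp, C0, Cone; simpl; rewrite exp_0, cos_0, sin_0; ceq. Qed.

Lemma exp_le_compat (x y : R) : x <= y -> exp x <= exp y.
Proof. intros [Hlt | ->]; [left; apply exp_increasing, Hlt | right; reflexivity]. Qed.

Lemma Cnorm_Cexp_bounds (z : CC) : exp (- Cnorm z) <= Cnorm (Cexp z) <= exp (Cnorm z).
Proof.
  rewrite Cnorm_Cexp; pose proof (Rabs_fst_le z).
  pose proof (Rle_abs (fst z)); pose proof (Rle_abs (- fst z)); rewrite Rabs_Ropp in *.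
  split; apply exp_le_compat; lra.
Qed.

Lemma Cexp_surjective (c : CC) : c <> C0 -> exists b, Cexp b = c.
Proof.
  intros Hc; pose proof (Cnorm_pos c Hc) as Hn; pose proof (Cnorm_sq c) as Hsq.
  set (n := Cnorm c) in *; clearbody n; destruct c as [x y]; simpl in *; clear Hc.
  assert (Hxn : -1 <= x / n <= 1).
  { split; [apply (Rmult_le_reg_r n) | apply (Rmult_le_reg_r n)]; try lra;
      unfold Rdiv; rewrite Rmult_assoc, Rinv_l by lra; nra. }
  assert (Hsin : sqrt (1 - (x / n)²) = Rabs (y / n)).
  { assert (E : 1 - (x / n)² = y / n * (y / n))
      by (unfold Rsqr; replace 1 with ((x * x + y * y) / (n * n)) by (rewrite <- Hsq; field; lra);
          field; lra).
    rewrite E; apply sqrt_lem_1; [nra | apply Rabs_pos |].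
    rewrite <- Rabs_mult; apply Rabs_pos_eq; nra. }
  destruct (Rle_dec 0 y) as [Hy | Hy];
    [exists (ln n, acos (x / n)) | exists (ln n, - acos (x / n))];
    unfold Cexp; simpl; rewrite ?cos_neg, ?sin_neg, exp_ln, cos_acos, sin_acos, Hsin by assumption.
  - rewrite Rabs_pos_eq by (apply Rmult_le_pos; [lra | left; apply Rinv_0_lt_compat; lra]); ceq; field; lra.
  - rewrite Rabs_left by (apply Rdiv_neg_pos; lra); ceq; field; lra.
Qed.

Definition cderivable_pt_lim (g : R -> CC) (t : R) (d : CC) : Prop :=
  derivable_pt_lim (fun x => fst (g x)) t (fst d) /\
  derivable_pt_lim (fun x => snd (g x)) t (snd d).

Lemma derivable_pt_lim_eq_r (g : R -> R) (t l l' : R) :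
  derivable_pt_lim g t l -> l = l' -> derivable_pt_lim g t l'.
Proof. intros H <-; exact H. Qed.

Lemma cderivable_pt_lim_unique (g : R -> CC) (t : R) (d d' : CC) :
  cderivable_pt_lim g t d -> cderivable_pt_lim g t d' -> d = d'.
Proof.
  intros [H1 H2] [H1' H2']; apply CC_eq; eapply uniqueness_limite; eassumption.
Qed.

Lemma cderivable_pt_lim_locally_ext (g h : R -> CC) (t a b : R) (d : CC) :
  a < t < b -> (forall x, a < x < b -> g x = h x) ->
  cderivable_pt_lim g t d -> cderivable_pt_lim h t d.
Proof.
  intros Ht Hgh [H1 H2]; split;
    [apply (derivable_pt_lim_locally_ext (fun x => fst (g x)) _ t a b)
    | apply (derivable_pt_lim_locally_ext (fun x => snd (g x)) _ t a b)];
    try assumption; intros x Hx; rewrite Hgh by exact Hx; reflexivity.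
Qed.

Lemma cderivable_pt_lim_mul (g h : R -> CC) (t : R) (d e : CC) :
  cderivable_pt_lim g t d -> cderivable_pt_lim h t e ->
  cderivable_pt_lim (fun x => Cmul (g x) (h x)) t (Cadd (Cmul d (h t)) (Cmul (g t) e)).
Proof.
  intros [G1 G2] [H1 H2]; split; cunfold.
  - eapply (derivable_pt_lim_eq_r
      (mult_fct (fun x => fst (g x)) (fun x => fst (h x)) -
       mult_fct (fun x => snd (g x)) (fun x => snd (h x)))%F);
      [apply derivable_pt_lim_minus; apply derivable_pt_lim_mult; eassumption | simpl; ring].
  - eapply (derivable_pt_lim_eq_r
      (mult_fct (fun x => fst (g x)) (fun x => snd (h x)) +
       mult_fct (fun x => snd (g x)) (fun x => fst (h x)))%F);
      [apply derivable_pt_lim_plus; apply derivable_pt_lim_mult; eassumption | simpl; ring].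
Qed.

Lemma cderivable_pt_lim_cmul (c : CC) (g : R -> CC) (t : R) (d : CC) :
  cderivable_pt_lim g t d -> cderivable_pt_lim (fun x => Cmul c (g x)) t (Cmul c d).
Proof.
  intros Hg.
  assert (Hc : cderivable_pt_lim (fun _ => c) t C0) by (split; apply derivable_pt_lim_const).
  replace (Cmul c d) with (Cadd (Cmul C0 (g t)) (Cmul c d)) by ceq.
  exact (cderivable_pt_lim_mul _ _ t _ _ Hc Hg).
Qed.

Lemma derivable_pt_lim_comp_scal (g : R -> R) (k t l : R) :
  derivable_pt_lim g (t * k) l -> derivable_pt_lim (fun x => g (x * k)) t (k * l).
Proof.
  intros Hg.
  apply (derivable_pt_lim_eq_r (comp g (fun x => id x * k)) t (l * (1 * k))); [| ring].
  apply derivable_pt_lim_comp; [| exact Hg].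
  apply derivable_pt_lim_scal_right, derivable_pt_lim_id.
Qed.

Lemma cderivable_pt_lim_Cexp (k : CC) (t : R) :
  cderivable_pt_lim (fun x => Cexp (Cscal x k)) t (Cmul k (Cexp (Cscal t k))).
Proof.
  pose proof (derivable_pt_lim_comp_scal exp (fst k) t _ (derivable_pt_lim_exp _)) as He.
  pose proof (derivable_pt_lim_comp_scal cos (snd k) t _ (derivable_pt_lim_cos _)) as Hc.
  pose proof (derivable_pt_lim_comp_scal sin (snd k) t _ (derivable_pt_lim_sin _)) as Hs.
  split; cunfold.
  - eapply (derivable_pt_lim_eq_r
      (mult_fct (fun x => exp (x * fst k)) (fun x => cos (x * snd k))));
      [apply derivable_pt_lim_mult; eassumption | unfold Cscal; simpl; ring].
  - eapply (derivable_pt_lim_eq_r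
      (mult_fct (fun x => exp (x * fst k)) (fun x => sin (x * snd k))));
      [apply derivable_pt_lim_mult; eassumption | unfold Cscal; simpl; ring].
Qed.

Lemma const_of_derivable_pt_lim_0 (g : R -> R) (a b : R) :
  (forall x, a < x < b -> derivable_pt_lim g x 0) ->
  forall x y, a < x < b -> a < y < b -> g x = g y.
Proof.
  intros Hg.
  assert (Hle : forall x y, a < x < b -> a < y < b -> x < y -> g x = g y).
  { intros x y Hx Hy Hxy.
    destruct (MVT_cor2 g (fun _ => 0) x y Hxy) as [c [Hc _]];
      [intros c Hc; apply Hg; lra | lra]. }
  intros x y Hx Hy; destruct (Rtotal_order x y) as [Hxy | [-> | Hxy]];
    [apply Hle | reflexivity | symmetry; apply Hle]; assumption.
Qed.

Lemma cconst_of_cderivable_pt_lim_0 (g : R -> CC) (a b : R) :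
  (forall x, a < x < b -> cderivable_pt_lim g x C0) ->
  forall x y, a < x < b -> a < y < b -> g x = g y.
Proof.
  intros Hg x y Hx Hy; apply CC_eq;
    [apply (const_of_derivable_pt_lim_0 (fun x => fst (g x)) a b)
    | apply (const_of_derivable_pt_lim_0 (fun x => snd (g x)) a b)];
    try assumption; intros z Hz; apply (Hg z Hz).
Qed.

(* [g t * exp (- t k)] has derivative zero. *)
Lemma linear_ode_Cexp (g : R -> CC) (k : CC) (rho : R) :
  (forall t, -rho < t < rho -> cderivable_pt_lim g t (Cmul k (g t))) ->
  forall t, -rho < t < rho -> g t = Cmul (g 0) (Cexp (Cscal t k)).
Proof.
  intros Hg t Ht.
  set (k' := Cscal (-1) k).
  assert (Hk : forall x, Cmul (Cexp (Cscal x k')) (Cexp (Cscal x k)) = Cone).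
  { intros x; rewrite <- Cexp_add, <- Cexp_C0; f_equal; unfold k'; ceq. }
  assert (H0 : forall x, -rho < x < rho ->
            cderivable_pt_lim (fun y => Cmul (g y) (Cexp (Cscal y k'))) x C0).
  { intros x Hx.
    pose proof (cderivable_pt_lim_mul _ _ x _ _ (Hg x Hx) (cderivable_pt_lim_Cexp k' x)) as H.
    replace C0 with (Cadd (Cmul (Cmul k (g x)) (Cexp (Cscal x k')))
                          (Cmul (g x) (Cmul k' (Cexp (Cscal x k'))))) by (unfold k'; ceq).
    exact H. }
  pose proof (cconst_of_cderivable_pt_lim_0 _ _ _ H0 t 0 Ht ltac:(lra)) as E.
  transitivity (Cmul (Cmul (g t) (Cexp (Cscal t k'))) (Cexp (Cscal t k))).
  - transitivity (Cmul (g t) (Cmul (Cexp (Cscal t k')) (Cexp (Cscal t k)))); [rewrite Hk|]; ceq.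
  - rewrite E; transitivity (Cmul (g 0) (Cmul (Cexp (Cscal 0 k')) (Cexp (Cscal t k)))); [ceq|].
    replace (Cscal 0 k') with C0 by ceq; rewrite Cexp_C0; unfold Cone; ceq.
Qed.

Definition is_C_derivative (f : CC -> CC) (z l : CC) : Prop :=
  forall eps, 0 < eps -> exists d, 0 < d /\
    forall h : CC, 0 < Cnorm h < d ->
      Cnorm (Csub (Csub (f (Cadd z h)) (f z)) (Cmul l h)) <= eps * Cnorm h.

Section Directional_derivative.

Variables (f : CC -> CC) (z l d : CC) (t0 : R).
Hypotheses (Hl : is_C_derivative f z l) (Hd : d <> C0).

Lemma derivable_pt_lim_proj_along (pr : CC -> R) :
  (forall a b, pr (Csub a b) = pr a - pr b) ->
  (forall h, pr (Cmul l (Cscal h d)) = h * pr (Cmul l d)) ->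
  (forall u, Rabs (pr u) <= Cnorm u) ->
  derivable_pt_lim (fun x => pr (f (Cadd z (Cscal (x - t0) d)))) t0 (pr (Cmul l d)).
Proof.
  intros Hsub Hlin Hle eps Heps.
  pose proof (Cnorm_pos d Hd) as Hnd; set (nd := Cnorm d) in *.
  destruct (Hl (eps / (2 * nd))) as [del [Hdel Hh]]; [apply Rdiv_lt_0_compat; lra|].
  assert (Hdel' : 0 < del / nd) by (apply Rdiv_lt_0_compat; lra).
  exists (mkposreal _ Hdel'); intros h Hh0 Hhdel; simpl in Hhdel.
  replace (t0 + h - t0) with h by ring; replace (t0 - t0) with 0 by ring.
  replace (Cadd z (Cscal 0 d)) with z by (destruct z; ceq).
  set (W := Csub (Csub (f (Cadd z (Cscal h d))) (f z)) (Cmul l (Cscal h d))).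
  assert (Hn : Cnorm (Cscal h d) = Rabs h * nd) by apply Cnorm_scal.
  assert (Hah : 0 < Rabs h) by (apply Rabs_pos_lt, Hh0).
  assert (HW : Cnorm W <= eps / 2 * Rabs h).
  { replace (eps / 2 * Rabs h) with (eps / (2 * nd) * Cnorm (Cscal h d)) by (rewrite Hn; field; lra).
    apply Hh; rewrite Hn; split; [nra|].
    apply (Rmult_lt_compat_r nd) in Hhdel; [| lra].
    replace (del / nd * nd) with del in Hhdel by (field; lra); lra. }
  replace ((pr (f (Cadd z (Cscal h d))) - pr (f z)) / h - pr (Cmul l d)) with (pr W / h)
    by (unfold W; rewrite !Hsub, Hlin; field; exact Hh0).
  unfold Rdiv; rewrite Rabs_mult, Rabs_inv.
  apply (Rmult_lt_reg_r (Rabs h)); [exact Hah|].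
  rewrite Rmult_assoc, Rinv_l by lra; pose proof (Hle W); nra.
Qed.

Lemma directional_derivative :
  cderivable_pt_lim (fun x => f (Cadd z (Cscal (x - t0) d))) t0 (Cmul l d).
Proof.
  split; apply derivable_pt_lim_proj_along; try (intros; cunfold; ring);
    [apply Rabs_fst_le | apply Rabs_snd_le].
Qed.

End Directional_derivative.

Lemma C_derivative_continuous (f : CC -> CC) (z l : CC) :
  is_C_derivative f z l -> forall eps, 0 < eps -> exists d, 0 < d /\
    forall u, Cnorm (Csub u z) < d -> Cnorm (Csub (f u) (f z)) < eps.
Proof.
  intros Hl eps Heps.
  destruct (Hl 1 Rlt_0_1) as [del [Hdel Hh]].
  set (M := Cnorm l + 1); assert (HM : 0 < M) by (pose proof (Cnorm_nonneg l); unfold M; lra).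
  exists (Rmin del (eps / M)); split; [apply Rmin_pos; [lra | apply Rdiv_lt_0_compat; lra]|].
  intros u Hu; pose proof (Rmin_l del (eps / M)) as Hmin1; pose proof (Rmin_r del (eps / M)) as Hmin2.
  set (h := Csub u z); replace u with (Cadd z h) by (unfold h; destruct u, z; ceq).
  destruct (Req_dec (Cnorm h) 0) as [Hh0 | Hh0].
  - rewrite (Cnorm_eq0 h Hh0); replace (Csub (f (Cadd z C0)) (f z)) with C0
      by (replace (Cadd z C0) with z by (destruct z; ceq); ceq).
    rewrite Cnorm_C0; exact Heps.
  - assert (Hh1 : Cnorm (Csub (Csub (f (Cadd z h)) (f z)) (Cmul l h)) <= 1 * Cnorm h)
      by (apply Hh; pose proof (Cnorm_nonneg h); unfold h in *; lra).
    replace (Csub (f (Cadd z h)) (f z))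
      with (Cadd (Csub (Csub (f (Cadd z h)) (f z)) (Cmul l h)) (Cmul l h)) by ceq.
    eapply Rle_lt_trans; [apply Cnorm_triangle|]; rewrite Cnorm_mul.
    assert (Hhm : Cnorm h * M < eps).
    { assert (Hhe : Cnorm h < eps / M) by (unfold h; lra).
      apply (Rmult_lt_compat_r M) in Hhe; [| exact HM]; unfold h in *.
      replace (eps / M * M) with eps in Hhe by (field; lra); lra. }
    unfold M in Hhm; pose proof (Cnorm_nonneg l); pose proof (Cnorm_nonneg h); nra.
Qed.

Lemma Cphase_eq_scal (a b : CC) : a <> C0 -> b <> C0 -> Cphase a = Cphase b ->
  a = Cscal (Cnorm a / Cnorm b) b.
Proof.
  intros Ha Hb H; pose proof (Cnorm_pos a Ha) as Hna; pose proof (Cnorm_pos b Hb) as Hnb.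
  unfold Cphase, Cscal in H; injection H; intros H2 H1.
  apply CC_eq; unfold Cscal; simpl;
    (apply (Rmult_eq_reg_l (/ Cnorm a)); [| apply Rinv_neq_0_compat; lra]);
    [rewrite H1 | rewrite H2]; field; lra.
Qed.

Lemma Cphase_eq_cross (a b : CC) : a <> C0 -> b <> C0 -> Cphase a = Cphase b ->
  fst b * snd a - snd b * fst a = 0.
Proof. intros Ha Hb H; rewrite (Cphase_eq_scal a b Ha Hb H); unfold Cscal; simpl; ring. Qed.

Lemma Rabs_lt_between (x r : R) : Rabs x < r <-> -r < x < r.
Proof. split; [intros H; apply Rabs_def2 in H | intros H; apply Rabs_def1]; lra. Qed.

Section Phase_invariant_square.

Variables (F : R -> R -> CC) (rho : R).
Hypothesis rho_pos : 0 < rho.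
Hypothesis F_neq0 : forall t s, Rabs t < rho -> Rabs s < rho -> F t s <> C0.
Hypothesis F_cauchy_riemann : forall t s, Rabs t < rho -> Rabs s < rho -> exists D,
  cderivable_pt_lim (fun x => F x s) t D /\ cderivable_pt_lim (fun y => F t y) s (Cmul Ci D).
Hypothesis F_phase : forall t s, Rabs t < rho -> Rabs s < rho ->
  Cphase (F t s) = Cphase (F 0 s).

Lemma Rabs0_lt_rho : Rabs 0 < rho.
Proof. rewrite Rabs_R0; exact rho_pos. Qed.

Lemma F_deriv_t_parallel (t s : R) (D : CC) : Rabs t < rho -> Rabs s < rho ->
  cderivable_pt_lim (fun x => F x s) t D -> fst (F t s) * snd D - snd (F t s) * fst D = 0.
Proof.
  intros Ht Hs [D1 D2].
  set (cross := fun x => fst (F t s) * snd (F x s) - snd (F t s) * fst (F x s)).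
  assert (Hcross : derivable_pt_lim cross t (fst (F t s) * snd D - snd (F t s) * fst D)).
  { apply (derivable_pt_lim_minus
      (mult_real_fct (fst (F t s)) (fun x => snd (F x s)))
      (mult_real_fct (snd (F t s)) (fun x => fst (F x s))));
      apply derivable_pt_lim_scal; assumption. }
  apply Rabs_lt_between in Ht.
  apply (uniqueness_limite cross t); [exact Hcross|].
  apply (derivable_pt_lim_locally_ext (fun _ => 0) cross t (-rho) rho); [exact Ht | | apply derivable_pt_lim_const].
  intros x Hx; apply Rabs_lt_between in Hx; apply Rabs_lt_between in Ht; symmetry.
  apply Cphase_eq_cross; try (apply F_neq0; assumption).
  rewrite (F_phase x s), (F_phase t s) by assumption; reflexivity.
Qed.

(* By Cauchy-Riemann, [d/ds |F|^2] is [-2] times the cross product of [F] and [dF/dt], which vanishes. *)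
Lemma F_norm_indep_s (t s : R) : Rabs t < rho -> Rabs s < rho -> Cnorm (F t s) = Cnorm (F t 0).
Proof.
  intros Ht Hs; unfold Cnorm; f_equal.
  apply (const_of_derivable_pt_lim_0
           (fun y => fst (F t y) * fst (F t y) + snd (F t y) * snd (F t y)) (-rho) rho);
    [| apply Rabs_lt_between; assumption | apply Rabs_lt_between, Rabs0_lt_rho].
  intros y Hy; apply Rabs_lt_between in Hy.
  destruct (F_cauchy_riemann t y Ht Hy) as [D [Ht' [Hs1 Hs2]]].
  pose proof (F_deriv_t_parallel t y D Ht Hy Ht') as Hpar.
  eapply derivable_pt_lim_eq_r.
  - apply (derivable_pt_lim_plus
      (mult_fct (fun y => fst (F t y)) (fun y => fst (F t y)))
      (mult_fct (fun y => snd (F t y)) (fun y => snd (F t y))));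
      apply derivable_pt_lim_mult; eassumption.
  - transitivity (-2 * (fst (F t y) * snd D - snd (F t y) * fst D));
      [unfold Ci; cunfold; ring | rewrite Hpar; ring].
Qed.

Lemma F_separates (t s : R) : Rabs t < rho -> Rabs s < rho ->
  Cmul (F t s) (F 0 0) = Cmul (F t 0) (F 0 s).
Proof.
  intros Ht Hs; pose proof Rabs0_lt_rho as H0.
  rewrite (Cphase_eq_scal _ _ (F_neq0 t s Ht Hs) (F_neq0 0 s H0 Hs) (F_phase t s Ht Hs)),
          (Cphase_eq_scal _ _ (F_neq0 t 0 Ht H0) (F_neq0 0 0 H0 H0) (F_phase t 0 Ht H0)),
          (F_norm_indep_s t s Ht Hs), (F_norm_indep_s 0 s H0 Hs).
  ceq.
Qed.

Lemma F_factor (t s : R) : Rabs t < rho -> Rabs s < rho ->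
  F t s = Cmul (Cmul (F t 0) (Cinv (F 0 0))) (F 0 s).
Proof.
  intros Ht Hs; pose proof Rabs0_lt_rho as H0.
  apply (Cmul_cancel (F 0 0)); [apply F_neq0; assumption|].
  transitivity (Cmul (F t s) (F 0 0)); [ceq|]; rewrite F_separates by assumption.
  transitivity (Cmul (Cmul (F 0 0) (Cinv (F 0 0))) (Cmul (F t 0) (F 0 s)));
    [rewrite Cmul_inv by (apply F_neq0; assumption) | ]; unfold Cone; ceq.
Qed.

Lemma F_ode_t_axis (D0 : CC) : cderivable_pt_lim (fun y => F 0 y) 0 (Cmul Ci D0) ->
  forall t, -rho < t < rho ->
  cderivable_pt_lim (fun x => F x 0) t (Cmul (Cmul D0 (Cinv (F 0 0))) (F t 0)).
Proof.
  intros HD0 t Ht; pose proof Rabs0_lt_rho as H0; apply Rabs_lt_between in Ht.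
  destruct (F_cauchy_riemann t 0 Ht H0) as [D [HDt HDs]].
  set (c := Cmul (F t 0) (Cinv (F 0 0))).
  assert (HDs' : cderivable_pt_lim (fun y => F t y) 0 (Cmul c (Cmul Ci D0))).
  { apply (cderivable_pt_lim_locally_ext (fun y => Cmul c (F 0 y)) _ 0 (-rho) rho); [lra | |].
    - intros y Hy; symmetry; apply F_factor; [| apply Rabs_lt_between]; assumption.
    - apply cderivable_pt_lim_cmul, HD0. }
  pose proof (cderivable_pt_lim_unique _ _ _ _ HDs HDs') as E.
  replace (Cmul (Cmul D0 (Cinv (F 0 0))) (F t 0)) with D; [exact HDt|].
  apply (Cmul_cancel Ci); [unfold Ci, C0; intros Hi; injection Hi; lra|].
  rewrite E; unfold c; ceq.
Qed.

Lemma F_ode_s_axis (D0 : CC) : cderivable_pt_lim (fun x => F x 0) 0 D0 ->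
  forall s, -rho < s < rho ->
  cderivable_pt_lim (fun y => F 0 y) s (Cmul (Cmul Ci (Cmul D0 (Cinv (F 0 0)))) (F 0 s)).
Proof.
  intros HD0 s Hs; pose proof Rabs0_lt_rho as H0; apply Rabs_lt_between in Hs.
  destruct (F_cauchy_riemann 0 s H0 Hs) as [D [HDt HDs]].
  set (c := Cmul (F 0 s) (Cinv (F 0 0))).
  assert (HDt' : cderivable_pt_lim (fun x => F x s) 0 (Cmul c D0)).
  { apply (cderivable_pt_lim_locally_ext (fun x => Cmul c (F x 0)) _ 0 (-rho) rho); [lra | |].
    - intros x Hx; rewrite (F_factor x s) by (assumption || (apply Rabs_lt_between; lra)); unfold c; ceq.
    - apply cderivable_pt_lim_cmul, HD0. }
  rewrite (cderivable_pt_lim_unique _ _ _ _ HDt HDt') in HDs.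
  replace (Cmul (Cmul Ci (Cmul D0 (Cinv (F 0 0)))) (F 0 s)) with (Cmul Ci (Cmul c D0));
    [exact HDs | unfold c; ceq].
Qed.

Lemma F_exp_form : exists kappa, forall t s, Rabs t < rho -> Rabs s < rho ->
  F t s = Cmul (F 0 0) (Cexp (Cmul kappa (t, s))).
Proof.
  pose proof Rabs0_lt_rho as H0.
  destruct (F_cauchy_riemann 0 0 H0 H0) as [D0 [HDt HDs]].
  set (kappa := Cmul D0 (Cinv (F 0 0))).
  exists kappa; intros t s Ht Hs.
  pose proof (linear_ode_Cexp _ _ rho (F_ode_t_axis D0 HDs) t (proj1 (Rabs_lt_between _ _) Ht)) as Et.
  pose proof (linear_ode_Cexp _ _ rho (F_ode_s_axis D0 HDt) s (proj1 (Rabs_lt_between _ _) Hs)) as Es.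
  rewrite F_factor, Et, Es by assumption.
  replace (Cmul kappa (t, s)) with (Cadd (Cscal t kappa) (Cscal s (Cmul Ci kappa)))
    by (unfold Ci; ceq).
  rewrite Cexp_add.
  transitivity (Cmul (Cmul (F 0 0) (Cinv (F 0 0)))
    (Cmul (F 0 0) (Cmul (Cexp (Cscal t kappa)) (Cexp (Cscal s (Cmul Ci kappa))))));
    [ceq | rewrite Cmul_inv by (apply F_neq0; assumption); unfold Cone; ceq].
Qed.

End Phase_invariant_square.

Lemma C_derivative_cauchy_riemann (f : CC -> CC) (z omega l : CC) (t0 s0 : R) :
  is_C_derivative f (Cadd z (Cmul (t0, s0) omega)) l -> omega <> C0 ->
  cderivable_pt_lim (fun x => f (Cadd z (Cmul (x, s0) omega))) t0 (Cmul l omega) /\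
  cderivable_pt_lim (fun y => f (Cadd z (Cmul (t0, y) omega))) s0 (Cmul Ci (Cmul l omega)).
Proof.
  intros Hl Hw; split.
  - replace (fun x => f (Cadd z (Cmul (x, s0) omega)))
      with (fun x => f (Cadd (Cadd z (Cmul (t0, s0) omega)) (Cscal (x - t0) omega)))
      by (apply functional_extensionality; intros x; f_equal; ceq).
    apply directional_derivative; assumption.
  - replace (fun y => f (Cadd z (Cmul (t0, y) omega)))
      with (fun y => f (Cadd (Cadd z (Cmul (t0, s0) omega)) (Cscal (y - s0) (Cmul Ci omega))))
      by (apply functional_extensionality; intros y; f_equal; unfold Ci; ceq).
    replace (Cmul Ci (Cmul l omega)) with (Cmul l (Cmul Ci omega)) by ceq.
    apply directional_derivative; [assumption|].
    intros H; apply Hw; apply (Cmul_cancel Ci); [unfold Ci, C0; intros Hi; injection Hi; lra|].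
    rewrite H; ceq.
Qed.

Lemma Cexp_affine_of_coordinates (g : CC -> CC) (z omega kappa : CC) (rho : R) :
  omega <> C0 -> g z <> C0 ->
  (forall t s, Rabs t < rho -> Rabs s < rho ->
     g (Cadd z (Cmul (t, s) omega)) = Cmul (g z) (Cexp (Cmul kappa (t, s)))) ->
  exists a b, forall u, Cnorm (Csub u z) < rho * Cnorm omega ->
    g u = Cexp (Cadd (Cmul a u) b).
Proof.
  intros Hw Hgz Hg; pose proof (Cnorm_pos omega Hw).
  destruct (Cexp_surjective (g z) Hgz) as [b0 Hb0].
  set (a := Cmul kappa (Cinv omega)).
  exists a, (Csub b0 (Cmul a z)); intros u Hu.
  set (tau := Cmul (Csub u z) (Cinv omega)).
  assert (Htau : Cnorm tau < rho).
  { unfold tau; rewrite Cnorm_mul, Cnorm_Cinv by exact Hw.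
    apply (Rmult_lt_reg_r (Cnorm omega)); [lra|].
    rewrite Rmult_assoc, Rinv_l by lra; lra. }
  assert (Hu_tau : u = Cadd z (Cmul (fst tau, snd tau) omega)).
  { rewrite <- surjective_pairing; unfold tau.
    transitivity (Cadd z (Cmul (Csub u z) (Cmul omega (Cinv omega))));
      [rewrite Cmul_inv by exact Hw; unfold Cone | ]; ceq. }
  pose proof (Rabs_fst_le tau); pose proof (Rabs_snd_le tau).
  rewrite Hu_tau, Hg by lra; rewrite <- Hu_tau.
  rewrite <- Hb0, <- Cexp_add, <- surjective_pairing; f_equal; unfold tau, a; ceq.
Qed.

Section Local_form.

Variables (f : CC -> CC) (P : CC -> Prop) (omega : CC).
Hypothesis P_discrete :
  forall z, exists r, 0 < r /\ forall w, P w -> w <> z -> r <= Cnorm (Csub w z).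
Hypothesis f_differentiable : forall z, ~ P z -> C_differentiable_at f z.
Hypothesis omega_neq0 : omega <> C0.
Hypothesis f_phase : forall (t : R) (z : CC),
  ~ P z -> f z <> C0 ->
  ~ P (Cadd z (Cscal t omega)) -> f (Cadd z (Cscal t omega)) <> C0 ->
  Cphase (f (Cadd z (Cscal t omega))) = Cphase (f z).

Lemma regular_neq0_nbhd (z : CC) : ~ P z -> f z <> C0 ->
  exists r, 0 < r /\ forall u, Cnorm (Csub u z) < r -> ~ P u /\ f u <> C0.
Proof.
  intros Hz Hfz.
  destruct (P_discrete z) as [r1 [Hr1 Hdisc]].
  destruct (f_differentiable z Hz) as [l Hl].
  destruct (C_derivative_continuous f z l Hl (Cnorm (f z))) as [r2 [Hr2 Hcont]];
    [apply Cnorm_pos, Hfz|].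
  exists (Rmin r1 r2); split; [apply Rmin_pos; assumption|].
  intros u Hu; pose proof (Rmin_l r1 r2); pose proof (Rmin_r r1 r2); split.
  - intros HPu; assert (u <> z) by (intros ->; contradiction).
    pose proof (Hdisc u HPu H1); lra.
  - intros Hfu; pose proof (Hcont u ltac:(lra)) as Hc.
    rewrite Hfu, Cnorm_sub_sym in Hc; replace (Csub (f z) C0) with (f z) in Hc by ceq; lra.
Qed.

Lemma locally_Cexp_affine (z : CC) : ~ P z -> f z <> C0 ->
  exists a b r, 0 < r /\ forall u, Cnorm (Csub u z) < r ->
    ~ P u /\ f u = Cexp (Cadd (Cmul a u) b).
Proof.
  intros Hz Hfz.
  destruct (regular_neq0_nbhd z Hz Hfz) as [r [Hr Hball]].
  pose proof (Cnorm_pos omega omega_neq0) as Hnw.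
  set (rho := r / (2 * Cnorm omega)).
  assert (Hrho : 0 < rho) by (apply Rdiv_lt_0_compat; lra).
  set (F := fun t s => f (Cadd z (Cmul (t, s) omega))).
  assert (HF : forall t s, Rabs t < rho -> Rabs s < rho ->
                 ~ P (Cadd z (Cmul (t, s) omega)) /\ F t s <> C0).
  { intros t s Ht Hs; apply Hball.
    replace (Csub (Cadd z (Cmul (t, s) omega)) z) with (Cmul (t, s) omega) by ceq.
    rewrite Cnorm_mul; pose proof (Cnorm_le_Rabs_sum (t, s)) as Hts; simpl in Hts.
    assert (Er : r = 2 * rho * Cnorm omega) by (unfold rho; field; lra).
    rewrite Er; apply Rmult_lt_compat_r; lra. }
  assert (HF_cr : forall t s, Rabs t < rho -> Rabs s < rho -> exists D,
      cderivable_pt_lim (fun x => F x s) t D /\ cderivable_pt_lim (fun y => F t y) s (Cmul Ci D)).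
  { intros t s Ht Hs; destruct (f_differentiable _ (proj1 (HF t s Ht Hs))) as [l Hl].
    exists (Cmul l omega); apply C_derivative_cauchy_riemann; assumption. }
  assert (HF_phase : forall t s, Rabs t < rho -> Rabs s < rho ->
      Cphase (F t s) = Cphase (F 0 s)).
  { intros t s Ht Hs; destruct (HF t s Ht Hs) as [HPts Hfts].
    destruct (HF 0 s ltac:(rewrite Rabs_R0; exact Hrho) Hs) as [HP0s Hf0s].
    unfold F in *; replace (Cadd z (Cmul (t, s) omega))
      with (Cadd (Cadd z (Cmul (0, s) omega)) (Cscal t omega)) in * by ceq.
    apply f_phase; assumption. }
  destruct (F_exp_form F rho Hrho (fun t s Ht Hs => proj2 (HF t s Ht Hs)) HF_cr HF_phase)
    as [kappa Hkappa].
  replace (F 0 0) with (f z) in Hkappa by (unfold F; f_equal; ceq).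
  destruct (Cexp_affine_of_coordinates f z omega kappa rho omega_neq0 Hfz Hkappa) as [a [b Hab]].
  exists a, b, (r / 2); split; [lra|].
  intros u Hu; split; [apply Hball; lra|].
  apply Hab; unfold rho; replace (r / (2 * Cnorm omega) * Cnorm omega) with (r / 2) by (field; lra).
  exact Hu.
Qed.

End Local_form.

Lemma Cexp_eq_one_near0 (c : CC) (e : R) : 0 < e ->
  (forall v, Cnorm v < e -> Cexp (Cmul c v) = Cone) -> c = C0.
Proof.
  intros He Hc; destruct c as [c1 c2].
  assert (Hreal : forall x, 0 < x < e -> c1 * x = 0 /\ sin (c2 * x) = 0).
  { intros x Hx.
    assert (Hn : Cnorm (x, 0) < e) by (rewrite Cnorm_real, Rabs_pos_eq; lra).
    pose proof (Hc _ Hn) as Hq; unfold Cexp, Cmul, Cone in Hq; simpl in Hq.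
    replace (c1 * x - c2 * 0) with (c1 * x) in Hq by ring;
      replace (c1 * 0 + c2 * x) with (c2 * x) in Hq by ring.
    injection Hq; intros Hs Hco; pose proof (exp_pos (c1 * x)).
    assert (Hs0 : sin (c2 * x) = 0) by (apply (Rmult_eq_reg_l (exp (c1 * x))); lra).
    pose proof (sin2_cos2 (c2 * x)) as Hsc; unfold Rsqr in Hsc; rewrite Hs0 in Hsc.
    assert (He1 : exp (c1 * x) = 1) by nra.
    split; [rewrite <- (ln_exp (c1 * x)), He1; apply ln_1 | exact Hs0]. }
  assert (Hc1 : c1 = 0)
    by (destruct (Hreal (e / 2)) as [H _]; [lra | apply (Rmult_eq_reg_r (e / 2)); lra]).
  subst c1; destruct (Req_dec c2 0) as [-> | Hc2]; [reflexivity | exfalso].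
  pose proof PI_RGT_0; pose proof (Rabs_pos_lt c2 Hc2).
  set (x := Rmin (e / 2) (PI / (2 * Rabs c2))).
  assert (Hx : 0 < x < e)
    by (unfold x; split; [apply Rmin_pos; [lra | apply Rdiv_lt_0_compat; lra]
                         | pose proof (Rmin_l (e / 2) (PI / (2 * Rabs c2))); lra]).
  assert (Hxc : Rabs c2 * x <= PI / 2).
  { replace (PI / 2) with (Rabs c2 * (PI / (2 * Rabs c2))) by (field; lra).
    apply Rmult_le_compat_l; [lra | apply Rmin_r]. }
  clearbody x; destruct (Hreal x Hx) as [_ Hs].
  destruct (Rlt_or_le 0 c2).
  - rewrite Rabs_pos_eq in Hxc by lra; pose proof (sin_gt_0 (c2 * x)); nra.
  - rewrite Rabs_left in Hxc by lra; pose proof (sin_lt_0_var (c2 * x)); nra.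
Qed.

Lemma Cexp_affine_shift (a b q u : CC) :
  Cexp (Cadd (Cmul a u) b) = Cmul (Cexp (Cadd (Cmul a q) b)) (Cexp (Cmul a (Csub u q))).
Proof. rewrite <- Cexp_add; f_equal; ceq. Qed.

Lemma Cexp_affine_eq_nbhd (a b a' b' q : CC) (e : R) : 0 < e ->
  (forall u, Cnorm (Csub u q) < e -> Cexp (Cadd (Cmul a u) b) = Cexp (Cadd (Cmul a' u) b')) ->
  forall u, Cexp (Cadd (Cmul a u) b) = Cexp (Cadd (Cmul a' u) b').
Proof.
  intros He Heq.
  assert (Hq : Cexp (Cadd (Cmul a q) b) = Cexp (Cadd (Cmul a' q) b'))
    by (apply Heq; replace (Csub q q) with C0 by ceq; rewrite Cnorm_C0; exact He).
  assert (Ha : Csub a a' = C0).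
  { apply (Cexp_eq_one_near0 _ e He); intros v Hv.
    assert (Hv' : Cnorm (Csub (Cadd q v) q) < e) by (replace (Csub (Cadd q v) q) with v by ceq; exact Hv).
    pose proof (Heq _ Hv') as E.
    rewrite (Cexp_affine_shift a b q), (Cexp_affine_shift a' b' q), Hq in E.
    apply Cmul_cancel in E; [| apply Cexp_neq0].
    apply (Cmul_cancel (Cexp (Cmul a' v))); [apply Cexp_neq0|].
    rewrite <- Cexp_add; replace (Csub (Cadd q v) q) with v in E by ceq.
    replace (Cadd (Cmul a' v) (Cmul (Csub a a') v)) with (Cmul a v) by ceq.
    rewrite E; unfold Cone; ceq. }
  assert (Ea : a' = a) by (apply CC_eq; cunfold; injection Ha; lra); subst a'.
  intros u; rewrite (Cexp_affine_shift a b q), (Cexp_affine_shift a b' q), Hq; reflexivity.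
Qed.

Lemma Cnorm_Cexp_affine_bounds (a b p u : CC) : Cnorm (Csub u p) <= 1 ->
  Cnorm (Cexp (Cadd (Cmul a p) b)) * exp (- Cnorm a) <= Cnorm (Cexp (Cadd (Cmul a u) b)) <=
  Cnorm (Cexp (Cadd (Cmul a p) b)) * exp (Cnorm a).
Proof.
  intros Hup; rewrite (Cexp_affine_shift a b p u), Cnorm_mul.
  pose proof (Cnorm_Cexp_bounds (Cmul a (Csub u p))) as [Hlo Hhi]; rewrite Cnorm_mul in Hlo, Hhi.
  pose proof (Cnorm_nonneg a); pose proof (Cnorm_nonneg (Csub u p)).
  pose proof (Cnorm_nonneg (Cexp (Cadd (Cmul a p) b))).
  assert (Hau : Cnorm a * Cnorm (Csub u p) <= Cnorm a) by nra.
  split; apply Rmult_le_compat_l; try assumption.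
  - apply (Rle_trans _ (exp (- (Cnorm a * Cnorm (Csub u p))))); [apply exp_le_compat; lra | exact Hlo].
  - apply (Rle_trans _ (exp (Cnorm a * Cnorm (Csub u p)))); [exact Hhi | apply exp_le_compat; lra].
Qed.

Definition agrees_near (f : CC -> CC) (P : CC -> Prop) (g : CC -> CC) (p : CC) : Prop :=
  exists r, 0 < r /\ forall u, Cnorm (Csub u p) < r -> ~ P u /\ f u = g u.

Definition adherent (A : CC -> Prop) (p : CC) : Prop :=
  forall eta, 0 < eta -> exists q, Cnorm (Csub q p) < eta /\ A q.

Lemma agrees_near_open (f : CC -> CC) (P : CC -> Prop) (g : CC -> CC) (p : CC) :
  agrees_near f P g p -> exists r, 0 < r /\ forall q, Cnorm (Csub q p) < r -> agrees_near f P g q.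
Proof.
  intros [r [Hr Hp]]; exists r; split; [exact Hr|]; intros q Hq.
  exists (r - Cnorm (Csub q p)); split; [lra|]; intros u Hu.
  apply Hp; pose proof (Cnorm_sub_triangle u q p); lra.
Qed.

Lemma real_induction (Q : R -> Prop) : Q 0 ->
  (forall x, 0 < x <= 1 -> (forall y, 0 <= y < x -> Q y) -> Q x) ->
  (forall x, 0 <= x < 1 -> Q x -> exists e, 0 < e /\ forall y, x <= y < x + e -> Q y) ->
  Q 1.
Proof.
  intros HQ0 Hclosed Hopen.
  set (S := fun l => 0 <= l <= 1 /\ forall m, 0 <= m <= l -> Q m).
  assert (HS0 : S 0) by (split; [lra | intros m Hm; replace m with 0 by lra; exact HQ0]).
  destruct (completeness S) as [L [HLub HLleast]];
    [exists 1; intros l [Hl _]; lra | exists 0; exact HS0 |].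
  assert (HL : 0 <= L <= 1) by (split; [apply HLub, HS0 | apply HLleast; intros l [Hl _]; lra]).
  assert (Hbelow : forall y, 0 <= y < L -> Q y).
  { intros y Hy; apply NNPP; intros HnQ.
    assert (L <= y); [| lra].
    apply HLleast; intros l [_ Hl]; apply Rnot_lt_le; intros Hyl; apply HnQ, Hl; lra. }
  assert (HSL : S L).
  { split; [exact HL|]; intros m Hm.
    destruct (Rlt_or_le m L); [apply Hbelow; lra|].
    replace m with L by lra; destruct (Req_dec L 0) as [-> | HL0]; [exact HQ0|].
    apply Hclosed; [lra | exact Hbelow]. }
  destruct (Req_dec L 1) as [<- | HL1]; [apply (proj2 HSL); lra | exfalso].
  destruct (Hopen L ltac:(lra) (proj2 HSL L ltac:(lra))) as [e [He Hext]].
  set (l := L + Rmin e (1 - L) / 2).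
  pose proof (Rmin_l e (1 - L)); pose proof (Rmin_r e (1 - L)).
  assert (Hpos : 0 < Rmin e (1 - L)) by (apply Rmin_pos; lra).
  assert (HSl : S l).
  { unfold l; split; [lra|]; intros m Hm.
    destruct (Rle_or_lt m L); [apply (proj2 HSL); lra | apply Hext; lra]. }
  pose proof (HLub l HSl); unfold l in *; lra.
Qed.

Section Continuation.

Variables (f : CC -> CC) (P : CC -> Prop) (omega a b : CC).
Hypothesis P_discrete :
  forall z, exists r, 0 < r /\ forall w, P w -> w <> z -> r <= Cnorm (Csub w z).
Hypothesis f_differentiable : forall z, ~ P z -> C_differentiable_at f z.
Hypothesis f_poles : forall p, P p -> forall M, exists d, 0 < d /\
  forall w, 0 < Cnorm (Csub w p) < d -> M < Cnorm (f w).
Hypothesis omega_neq0 : omega <> C0.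
Hypothesis f_phase : forall (t : R) (z : CC),
  ~ P z -> f z <> C0 ->
  ~ P (Cadd z (Cscal t omega)) -> f (Cadd z (Cscal t omega)) <> C0 ->
  Cphase (f (Cadd z (Cscal t omega))) = Cphase (f z).

Let G (u : CC) : CC := Cexp (Cadd (Cmul a u) b).

(* Near [p], [|G|] lies between [|G p| e^-|a|] and [|G p| e^|a|]: this rules out poles and zeros of [f]. *)
Lemma adherent_not_pole (p : CC) : adherent (agrees_near f P G) p -> ~ P p.
Proof.
  intros Hp HPp.
  destruct (f_poles p HPp (Cnorm (G p) * exp (Cnorm a))) as [d [Hd Hpole]].
  destruct (Hp (Rmin d 1)) as [q [Hqp [r [Hr Hq]]]]; [apply Rmin_pos; lra|].
  pose proof (Rmin_l d 1); pose proof (Rmin_r d 1).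
  destruct (Hq q) as [HPq Hfq]; [replace (Csub q q) with C0 by ceq; rewrite Cnorm_C0; exact Hr|].
  assert (Hqp0 : 0 < Cnorm (Csub q p)).
  { destruct (Cnorm_nonneg (Csub q p)) as [| Hqp0]; [assumption | exfalso].
    apply HPq; replace q with p; [exact HPp|].
    pose proof (Cnorm_eq0 _ (eq_sym Hqp0)) as E; apply CC_eq; cunfold; injection E; lra. }
  assert (Hbig : Cnorm (Cexp (Cadd (Cmul a p) b)) * exp (Cnorm a) < Cnorm (f q))
    by (apply Hpole; lra).
  rewrite Hfq in Hbig.
  pose proof (Cnorm_Cexp_affine_bounds a b p q ltac:(lra)); unfold G in *; lra.
Qed.

Lemma adherent_neq0 (p : CC) : adherent (agrees_near f P G) p -> ~ P p -> f p <> C0.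
Proof.
  intros Hp HPp Hfp.
  destruct (f_differentiable p HPp) as [l Hl].
  assert (Heps : 0 < Cnorm (G p) * exp (- Cnorm a))
    by (apply Rmult_lt_0_compat; [apply Cnorm_pos, Cexp_neq0 | apply exp_pos]).
  destruct (C_derivative_continuous f p l Hl _ Heps) as [d [Hd Hcont]].
  destruct (Hp (Rmin d 1)) as [q [Hqp [r [Hr Hq]]]]; [apply Rmin_pos; lra|].
  pose proof (Rmin_l d 1); pose proof (Rmin_r d 1).
  destruct (Hq q) as [_ Hfq]; [replace (Csub q q) with C0 by ceq; rewrite Cnorm_C0; exact Hr|].
  pose proof (Hcont q ltac:(lra)) as Hsmall.
  rewrite Hfp, Hfq in Hsmall; replace (Csub (G q) C0) with (G q) in Hsmall by ceq.
  pose proof (Cnorm_Cexp_affine_bounds a b p q ltac:(lra)); unfold G in *; lra.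
Qed.

Lemma agrees_near_closed (p : CC) : adherent (agrees_near f P G) p -> agrees_near f P G p.
Proof.
  intros Hp.
  pose proof (adherent_not_pole p Hp) as HPp.
  destruct (locally_Cexp_affine f P omega P_discrete f_differentiable omega_neq0 f_phase p HPp
              (adherent_neq0 p Hp HPp)) as [a' [b' [r [Hr Hloc]]]].
  destruct (Hp (r / 2)) as [q [Hqp [rq [Hrq Hq]]]]; [lra|].
  assert (HG : forall u, Cexp (Cadd (Cmul a' u) b') = G u).
  { apply (Cexp_affine_eq_nbhd _ _ _ _ q (Rmin rq (r / 2))); [apply Rmin_pos; lra|].
    intros u Hu; pose proof (Rmin_l rq (r / 2)); pose proof (Rmin_r rq (r / 2)).
    pose proof (Cnorm_sub_triangle u q p).
    transitivity (f u); [symmetry; apply Hloc | apply Hq]; lra. }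
  exists r; split; [exact Hr|]; intros u Hu; rewrite <- HG; apply Hloc, Hu.
Qed.

Lemma agrees_near_everywhere (z0 : CC) : agrees_near f P G z0 -> forall w, agrees_near f P G w.
Proof.
  intros Hz0 w.
  set (d := Csub w z0); set (seg := fun m => Cadd z0 (Cscal m d)).
  assert (Hseg : forall x y, Cnorm (Csub (seg y) (seg x)) = Rabs (y - x) * Cnorm d)
    by (intros x y; rewrite <- Cnorm_scal; f_equal; unfold seg; ceq).
  assert (Hnd : 0 < Cnorm d + 1) by (pose proof (Cnorm_nonneg d); lra).
  assert (Hshort : forall x y r, 0 < r -> Rabs (y - x) < r / (Cnorm d + 1) ->
                     Cnorm (Csub (seg y) (seg x)) < r).
  { intros x y r Hr Hxy; rewrite Hseg; pose proof (Rabs_pos (y - x)); pose proof (Cnorm_nonneg d).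
    apply (Rmult_lt_compat_r (Cnorm d + 1)) in Hxy; [| exact Hnd].
    replace (r / (Cnorm d + 1) * (Cnorm d + 1)) with r in Hxy by (field; lra); nra. }
  replace w with (seg 1) by (unfold seg, d; ceq).
  apply (real_induction (fun m => agrees_near f P G (seg m))).
  - replace (seg 0) with z0 by (unfold seg; ceq); exact Hz0.
  - intros x Hx Hbelow; apply agrees_near_closed; intros eta Heta.
    set (y := Rmax 0 (x - eta / (Cnorm d + 1) / 2)).
    assert (Hy : 0 <= y < x /\ x - y < eta / (Cnorm d + 1)).
    { pose proof (Rdiv_lt_0_compat _ _ Heta Hnd); unfold y.
      destruct (Rle_lt_dec 0 (x - eta / (Cnorm d + 1) / 2));
        [rewrite Rmax_right | rewrite Rmax_left]; lra. }
    exists (seg y); split; [apply Hshort; [| rewrite Rabs_minus_sym, Rabs_pos_eq]; lra|].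
    apply Hbelow; lra.
  - intros x Hx Hagree; destruct (agrees_near_open f P G _ Hagree) as [r [Hr Hnear]].
    exists (r / (Cnorm d + 1)); split; [apply Rdiv_lt_0_compat; lra|].
    intros y Hy; apply Hnear, Hshort; [exact Hr | rewrite Rabs_pos_eq; lra].
Qed.

End Continuation.

Theorem mainTheorem9 (f : CC -> CC) (P : CC -> Prop) (omega : CC) :
  meromorphic_on_C f P ->
  (exists z, ~ P z /\ f z <> C0) ->
  omega <> C0 ->
  (forall (t : R) (z : CC),
     ~ P z -> f z <> C0 ->
     ~ P (Cadd z (Cscal t omega)) -> f (Cadd z (Cscal t omega)) <> C0 ->
     Cphase (f (Cadd z (Cscal t omega))) = Cphase (f z)) ->
  exists a b : CC, forall z : CC, ~ P z /\ f z = Cexp (Cadd (Cmul a z) b).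
Proof.
  intros [Hdisc [Hdiff Hpoles]] [z0 [Hz0 Hfz0]] Hw Hphase.
  destruct (locally_Cexp_affine f P omega Hdisc Hdiff Hw Hphase z0 Hz0 Hfz0)
    as [a [b [r [Hr Hloc]]]].
  exists a, b; intros z.
  destruct (agrees_near_everywhere f P omega a b Hdisc Hdiff Hpoles Hw Hphase z0
              (ex_intro _ r (conj Hr Hloc)) z) as [rz [Hrz Hz]].
  apply Hz; replace (Csub z z) with C0 by ceq; rewrite Cnorm_C0; exact Hrz.
Qed.
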